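(* Let $\beta,\gamma,\mu>0$, $0<p<\tfrac12$, $\delta=\beta/(\gamma+\mu)$ with $4(1-p)<\delta<\tfrac1p$. Then the Jacobian at $E_2$ of the $(S_0,S_1,A)$ subsystem of the temporary adoption model, $$J=\begin{pmatrix}-\beta A-\mu&0&-\beta S_0\\(1-p)\beta A&-\beta A-\mu&(1-p)\beta S_0-\beta S_1\\ p\beta A&\beta A&\beta(pS_0+S_1)-\gamma-\mu\end{pmatrix},$$ has exactly one eigenvalue with positive real part (which is real) and two eigenvalues with negative real part. In particular $E_2$ is a hyperbolic saddle with a one-dimensional unstable manifold.
   Context: The temporary adoption model is $S_0'=\mu-\beta S_0A-\mu S_0$, $S_1'=(1-p)\beta S_0A-\beta S_1A-\mu S_1$, $A'=\beta(pS_0+S_1)A-(\gamma+\mu)A$, $R'=\gamma A-\mu R$, with $S_0+S_1+A+R=1$. $E_2$ is the equilibrium with $A=A_2=\tfrac12(1+\tfrac{\gamma}{\mu})^{-1}\big[1-2\delta^{-1}-\sqrt{1-4(1-p)\delta^{-1}}\big]$, $S_0=1/(\delta(\frac{\gamma}{\mu}+1)A+1)$, $S_1=(1-p)\delta(\frac{\gamma}{\mu}+1)A/(\delta(\frac{\gamma}{\mu}+1)A+1)^2$, $R=\frac{\gamma}{\mu}A$. *)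

(* eigenvalues are taken in an arbitrary numeric algebraically
   closed field C (e.g. the complex numbers); the model parameters are real
   elements of C. *)
From HB Require Import structures.
From mathcomp Require Import all_boot all_order all_algebra.
Set Implicit Arguments. Unset Strict Implicit. Unset Printing Implicit Defensive.
Import Order.TTheory GRing.Theory Num.Theory.
Local Open Scope ring_scope.

Section TA.
Variable C : numClosedFieldType.
Variables (beta gamma mu p : C).

Definition delta : C := beta / (gamma + mu).

Definition A2 : C :=
  2^-1 * (1 + gamma / mu)^-1 *
  (1 - 2 * delta^-1 - sqrtC (1 - 4 * (1 - p) * delta^-1)).
Definition S0_2 : C := 1 / (delta * (gamma / mu + 1) * A2 + 1).
Definition S1_2 : C :=
  (1 - p) * delta * (gamma / mu + 1) * A2 / (delta * (gamma / mu + 1) * A2 + 1) ^+ 2.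
Definition R_2 : C := gamma / mu * A2.

Definition jac (S0 S1 A : C) : 'M[C]_3 :=
  \matrix_(i < 3, j < 3)
    match nat_of_ord i, nat_of_ord j with
    | 0, 0 => - beta * A - mu
    | 0, 1 => 0
    | 0, _ => - beta * S0
    | 1, 0 => (1 - p) * beta * A
    | 1, 1 => - beta * A - mu
    | 1, _ => (1 - p) * beta * S0 - beta * S1
    | _, 0 => p * beta * A
    | _, 1 => beta * A
    | _, _ => beta * (p * S0 + S1) - gamma - mu
    end.

Definition J_E2 : 'M[C]_3 := jac S0_2 S1_2 A2.
End TA.

From HB Require Import structures.
From mathcomp Require Import all_boot all_order all_algebra.
From mathcomp Require Import ring.
Set Implicit Arguments. Unset Strict Implicit. Unset Printing Implicit Defensive.
Import Order.TTheory GRing.Theory Num.Theory.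
Local Open Scope ring_scope.

(* Write y = beta A / mu for the normalised adopter level at E_2.  The
   closed formula for A_2 makes y the smaller root of
   delta (p + y) = (1 + y)^2, and the hypotheses 4(1-p) < delta < 1/p give
   0 < y < 1 - 2p.  Substituting S_0 = 1/(1+y), S_1 = (1-p)y/(1+y)^2 into the
   Jacobian kills its (3,3) entry, and its characteristic polynomial becomes a
   real monic cubic X^3 + a X^2 + b X + c with a = 2 mu (1 + y) > 0 and
   c = - beta mu^2 y (1 - 2p - y) / (1 + y) < 0.

   Over a numeric closed field it
   then shows that a real monic cubic with a > 0 and c < 0 has one positive
   real root and two roots of negative real part: its roots are either all
   real or a real root and a conjugate pair, and in both cases the signs are
   forced by the Vieta relations for the sum (-a) and the product (-c). *)

Section MonicCubic.
Context {R : comNzRingType}.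
Implicit Types a b c : R.

Definition cub a b c : {poly R} := 'X^3 + a%:P * 'X^2 + b%:P * 'X + c%:P.

Lemma size_cub a b c : size (cub a b c) = 4%N.
Proof.
have sizeCM (x : R) (q : {poly R}) : (size (x%:P * q)%R <= size q)%N.
  by rewrite mul_polyC size_scale_leq.
rewrite /cub -!addrA size_addl ?size_polyXn //.
rewrite (leq_ltn_trans (size_polyD _ _)) // gtn_max.
rewrite (leq_ltn_trans (sizeCM _ _)) ?size_polyXn //=.
rewrite (leq_ltn_trans (size_polyD _ _)) // gtn_max.
rewrite (leq_ltn_trans (sizeCM _ _)) ?size_polyX //=.
by rewrite (leq_ltn_trans (size_polyC_leq1 _)).
Qed.

Lemma cub_inj a b c a' b' c' :
  cub a b c = cub a' b' c' -> [/\ a = a', b = b' & c = c'].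
Proof.
have coefs x y z : [/\ (cub x y z)`_0 = z, (cub x y z)`_1 = y & (cub x y z)`_2 = x].
  by rewrite /cub !coefD !coefCM !coefXn !coefX !coefC /=; split; ring.
move=> E; have [c0 c1 c2] := coefs a b c; have [c0' c1' c2'] := coefs a' b' c'.
by split; [rewrite -c2 -c2' | rewrite -c1 -c1' | rewrite -c0 -c0']; rewrite E.
Qed.

Lemma prod3_XsubC r1 r2 r3 :
  ('X - r1%:P) * ('X - r2%:P) * ('X - r3%:P) =
  cub (- (r1 + r2 + r3)) (r1 * r2 + r1 * r3 + r2 * r3) (- (r1 * r2 * r3)).
Proof. by rewrite /cub !(rmorphN, rmorphD, rmorphM) /=; ring. Qed.

End MonicCubic.

Lemma det_mx33 (R : comNzRingType) (f : nat -> nat -> R) :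
  \det (\matrix_(i < 3, j < 3) f i j) =
    f 0 0 * f 1 1 * f 2 2 + f 0 1 * f 1 2 * f 2 0 + f 0 2 * f 1 0 * f 2 1
  - f 0 2 * f 1 1 * f 2 0 - f 0 0 * f 1 2 * f 2 1 - f 0 1 * f 1 0 * f 2 2.
Proof.
rewrite (expand_det_row _ 0) !big_ord_recl big_ord0 /cofactor.
rewrite !(expand_det_row _ 0) !big_ord_recl !big_ord0 /cofactor.
by rewrite !det_mx11 !mxE /= !expr0 !expr1 !exprS !expr0 /=; ring.
Qed.

Lemma char_poly_mx33 (R : comNzRingType) (f : nat -> nat -> R) :
  char_poly (\matrix_(i < 3, j < 3) f i j) =
  cub (- (f 0 0 + f 1 1 + f 2 2))
      (f 0 0 * f 1 1 + f 0 0 * f 2 2 + f 1 1 * f 2 2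
         - f 0 1 * f 1 0 - f 0 2 * f 2 0 - f 1 2 * f 2 1)
      (- \det (\matrix_(i < 3, j < 3) f i j)).
Proof.
rewrite det_mx33 /char_poly /char_poly_mx.
have -> : 'X%:M - map_mx polyC (\matrix_(i < 3, j < 3) f i j) =
   \matrix_(i < 3, j < 3) ((nat_of_ord i == nat_of_ord j)%:R * 'X - (f i j)%:P).
  by apply/matrixP => i j; rewrite !mxE mulr_natl.
rewrite (@det_mx33 _ (fun i j => (i == j)%:R * 'X - (f i j)%:P)) /cub /=.
by rewrite !(rmorphB, rmorphD, rmorphM, rmorphN) /=; ring.
Qed.

Lemma cub_split (C : closedFieldType) (a b c : C) :
  exists r1 r2 r3 : C, cub a b c = ('X - r1%:P) * ('X - r2%:P) * ('X - r3%:P).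
Proof.
have [r def_cub] := closed_field_poly_normal (cub a b c).
have monic_cub : lead_coef (cub a b c) = 1.
  by rewrite lead_coefE size_cub /cub !coefD !coefCM !coefXn !coefX !coefC /=; ring.
rewrite monic_cub scale1r in def_cub.
have := size_cub a b c; rewrite [in size _]def_cub size_prod_XsubC.
case: r def_cub => [|r1 [|r2 [|r3 [|]]]] // def_cub _.
by exists r1, r2, r3; rewrite def_cub !big_cons big_nil mulr1 mulrA.
Qed.

Section RealCubic.
Variable C : numClosedFieldType.
Implicit Types a c t z : C.

Lemma real_addC_conj z : z + z^* \is Num.real.
Proof. by rewrite CrealE rmorphD /= conjCK addrC. Qed.

(* A real root t with a conjugate pair z, z^*: the product t |z|^2 = -c > 0
   forces t > 0, and then the sum t + 2 Re z = -a < 0 forces Re z < 0. *)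
Lemma conj_pair_signs a c t z : t \is Num.real -> 0 < a -> c < 0 ->
  t + z + z^* = - a -> t * (z * z^*) = - c -> 0 < t /\ 'Re z < 0.
Proof.
move=> tR a0 c0 sum_roots prod_roots.
have prod_pos : 0 < t * (z * z^*) by rewrite prod_roots oppr_gt0.
have t0 : 0 < t.
  rewrite real_ltNge ?real0 //; apply/negP => t_le0.
  have := lt_le_trans prod_pos (mulr_le0_ge0 t_le0 (mul_conjC_ge0 z)).
  by rewrite ltxx.
split => //; rewrite ReE.
have -> : z + z^* = - a - t by rewrite -sum_roots; ring.
by rewrite pmulr_llt0 ?invr_gt0 ?ltr0n // subr_lt0 (lt_trans _ t0) // oppr_lt0.
Qed.

Lemma real_triple_signs (r1 r2 r3 : C) :
  r1 \is Num.real -> r2 \is Num.real -> r3 \is Num.real ->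
  r1 + r2 + r3 < 0 -> 0 < r1 * r2 * r3 ->
  [\/ [/\ 0 < r1, r2 < 0 & r3 < 0], [/\ 0 < r2, r1 < 0 & r3 < 0]
    | [/\ 0 < r3, r1 < 0 & r2 < 0]].
Proof.
move=> R1 R2 R3 sum_neg prod_pos.
have sign (x : C) : x \is Num.real -> x != 0 -> (x < 0) || (0 < x).
  by move=> xR x0; rewrite -real_neqr_lt ?real0.
move: (prod_pos); rewrite lt0r !mulf_eq0 !negb_or => /andP[/andP[/andP[n1 n2] n3] _].
have prod_not_neg : ~ r1 * r2 * r3 < 0 by move/(lt_trans prod_pos); rewrite ltxx.
case/orP: (sign _ R1 n1) => s1; case/orP: (sign _ R2 n2) => s2;
  case/orP: (sign _ R3 n3) => s3; try by constructor.
- by case: prod_not_neg; rewrite pmulr_rlt0 // nmulr_rgt0.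
- by case: prod_not_neg; rewrite nmulr_rlt0 // nmulr_rlt0.
- by case: prod_not_neg; rewrite nmulr_rlt0 // pmulr_rlt0.
- by case: prod_not_neg; rewrite pmulr_rlt0 // pmulr_rgt0.
- by have := lt_trans sum_neg (addr_gt0 (addr_gt0 s1 s2) s3); rewrite ltxx.
Qed.

Section RootsWithRealSymmetricFunctions.
Variables r1 r2 r3 : C.
Hypotheses (e1R : r1 + r2 + r3 \is Num.real)
           (e2R : r1 * r2 + r1 * r3 + r2 * r3 \is Num.real)
           (e3R : r1 * r2 * r3 \is Num.real).

Lemma conj_root z : (z - r1) * (z - r2) * (z - r3) = 0 ->
  [\/ z^* = r1, z^* = r2 | z^* = r3].
Proof.
have vieta w : (w - r1) * (w - r2) * (w - r3) =
  w ^+ 3 - (r1 + r2 + r3) * w ^+ 2 + (r1 * r2 + r1 * r3 + r2 * r3) * w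
  - r1 * r2 * r3 by ring.
move=> root_z.
have : (z^* - r1) * (z^* - r2) * (z^* - r3) = 0.
  rewrite vieta -(conj_Creal e1R) -(conj_Creal e2R) -(conj_Creal e3R).
  by rewrite -!(rmorphXn, rmorphM, rmorphB, rmorphD) /= -vieta root_z conjC0.
move/eqP; rewrite !mulf_eq0 !subr_eq0 => /orP[/orP[]|] /eqP ->; by constructor.
Qed.

Lemma real_cubic_roots_shape :
  [\/ [/\ r1 \is Num.real, r2 \is Num.real & r3 \is Num.real],
      r1 \is Num.real /\ r3 = r2^*,
      r2 \is Num.real /\ r3 = r1^*
    | r3 \is Num.real /\ r2 = r1^*].
Proof.
have conj_nonreal (x : C) : x \isn't Num.real -> x^* != x.
  by apply: contra => /eqP; rewrite CrealE => ->.
have root1 : (r1 - r1) * (r1 - r2) * (r1 - r3) = 0 by rewrite subrr !mul0r.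
have root2 : (r2 - r1) * (r2 - r2) * (r2 - r3) = 0 by rewrite subrr mulr0 mul0r.
have [R1|N1] := boolP (r1 \is Num.real).
  have [R2|N2] := boolP (r2 \is Num.real).
    have -> : r3 = (r1 + r2 + r3) - r1 - r2 by ring.
    by constructor 1; split => //; rewrite !rpredB.
  case: (conj_root root2) => h; last by constructor 2.
    by move: N2; rewrite -(conjCK r2) h conj_Creal ?R1.
  by move: (conj_nonreal _ N2); rewrite h eqxx.
case: (conj_root root1) => h.
- by move: (conj_nonreal _ N1); rewrite h eqxx.
- have -> : r3 = (r1 + r2 + r3) - (r1 + r1^*) by rewrite h; ring.
  by constructor 4; rewrite rpredB ?real_addC_conj.
- have -> : r2 = (r1 + r2 + r3) - (r1 + r1^*) by rewrite h; ring.
  by constructor 3; rewrite rpredB ?real_addC_conj.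
Qed.

End RootsWithRealSymmetricFunctions.

Lemma real_cubic_saddle (a b c : C) :
  b \is Num.real -> 0 < a -> c < 0 ->
  exists l1 l2 l3 : C,
    cub a b c = ('X - l1%:P) * ('X - l2%:P) * ('X - l3%:P)
    /\ l1 \is Num.real /\ 0 < l1 /\ 'Re l2 < 0 /\ 'Re l3 < 0.
Proof.
move=> bR a0 c0.
have [r1 [r2 [r3 def_cub]]] := cub_split a b c.
have := prod3_XsubC r1 r2 r3; rewrite -def_cub => /cub_inj[ha hb hc].
have sum_roots : r1 + r2 + r3 = - a by rewrite ha opprK.
have prod_roots : r1 * r2 * r3 = - c by rewrite hc opprK.
have e1R : r1 + r2 + r3 \is Num.real by rewrite sum_roots rpredN gtr0_real.
have e2R : r1 * r2 + r1 * r3 + r2 * r3 \is Num.real by rewrite -hb.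
have e3R : r1 * r2 * r3 \is Num.real by rewrite prod_roots rpredN ltr0_real.
have ReR (x : C) : x \is Num.real -> 'Re x = x by move/Creal_ReP.
rewrite def_cub.
case: (real_cubic_roots_shape e1R e2R e3R) => [[R1 R2 R3]|[R1 r3E]|[R2 r3E]|[R3 r2E]].
- have sum_neg : r1 + r2 + r3 < 0 by rewrite sum_roots oppr_lt0.
  have prod_pos : 0 < r1 * r2 * r3 by rewrite prod_roots oppr_gt0.
  case: (real_triple_signs R1 R2 R3 sum_neg prod_pos) => [[s1 s2 s3]|[s2 s1 s3]|[s3 s1 s2]].
  + by exists r1, r2, r3; rewrite !ReR.
  + by exists r2, r1, r3; rewrite !ReR //; split; first ring.
  + by exists r3, r1, r2; rewrite !ReR //; split; first ring.
- have [t0 re2] : 0 < r1 /\ 'Re r2 < 0.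
    apply: (conj_pair_signs R1 a0 c0); rewrite -r3E -?sum_roots -?prod_roots; ring.
  by exists r1, r2, r3; rewrite r3E Re_conj.
- have [t0 re1] : 0 < r2 /\ 'Re r1 < 0.
    apply: (conj_pair_signs R2 a0 c0); rewrite -r3E -?sum_roots -?prod_roots; ring.
  by exists r2, r1, r3; rewrite r3E Re_conj; split; first ring.
- have [t0 re1] : 0 < r3 /\ 'Re r1 < 0.
    apply: (conj_pair_signs R3 a0 c0); rewrite -r2E -?sum_roots -?prod_roots; ring.
  by exists r3, r1, r2; rewrite r2E Re_conj; split; first ring.
Qed.

End RealCubic.

(* With y = d (1 - 2/d - sqrt(1 - 4(1-p)/d)) / 2, the closed formula for the
   adopter level of E_2 in units of mu / beta: y is the smaller root of
   d (p + y) = (1 + y)^2 and lies strictly between 0 and 1 - 2p. *)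
Lemma adopter_level (C : numClosedFieldType) (d p : C) :
  0 < d -> 0 < p -> p < 2^-1 -> 4 * (1 - p) < d -> d < p^-1 ->
  let y := d * (1 - 2 * d^-1 - sqrtC (1 - 4 * (1 - p) * d^-1)) / 2 in
  [/\ 0 < y, 0 < 1 - 2 * p - y & d * (p + y) = (1 + y) ^+ 2].
Proof.
move=> d0 p0 p_lt_half d_gt d_lt /=.
have dn0 : d != 0 by rewrite gt_eqF.
have p2_lt1 : 0 < 1 - 2 * p.
  have -> : 1 - 2 * p = 2 * (2^-1 - p) by field.
  by rewrite mulr_gt0 ?ltr0n // subr_gt0.
have p_lt1 : 0 < 1 - p.
  have -> : 1 - p = (1 - 2 * p) + p by ring.
  by rewrite addr_gt0.
have pd_lt1 : 0 < 1 - p * d.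
  by move: d_lt; rewrite -(ltr_pM2l p0) mulfV ?gt_eqF // subr_gt0.
set w := 1 - 4 * (1 - p) * d^-1.
have w_gt0 : 0 < w.
  have -> : w = (d - 4 * (1 - p)) / d by rewrite /w; field.
  by rewrite divr_gt0 // subr_gt0.
have w_lt1 : 0 < 1 - w.
  have -> : 1 - w = 4 * (1 - p) / d by rewrite /w; ring.
  by rewrite divr_gt0 // mulr_gt0 ?ltr0n.
have e_gt0 : 0 < 1 - 2 * d^-1.
  have -> : 1 - 2 * d^-1 = ((d - 4 * (1 - p)) + 2 * (1 - 2 * p)) / d by field.
  by rewrite divr_gt0 // addr_gt0 ?mulr_gt0 ?ltr0n // subr_gt0.
move: (sqrtC w) (sqrtC_ge0 w) (sqrtCK w) => s; rewrite (ltW w_gt0) => s_ge0 s2.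
(* w < sqrt w < 1 - 2/d, compared through squares *)
have w_lt_s : w < s.
  rewrite -ltr_sqr ?nnegrE ?(ltW w_gt0) // s2 -subr_gt0.
  have -> : w - w ^+ 2 = w * (1 - w) by ring.
  by rewrite mulr_gt0.
have s_lt_e : s < 1 - 2 * d^-1.
  rewrite -ltr_sqr ?nnegrE ?(ltW e_gt0) // s2 -subr_gt0.
  have -> : (1 - 2 * d^-1) ^+ 2 - w = 4 / d ^+ 2 * (1 - p * d) by rewrite /w; field.
  by rewrite mulr_gt0 // divr_gt0 ?ltr0n // exprn_gt0.
split.
- by rewrite divr_gt0 ?ltr0n // mulr_gt0 // subr_gt0.
- have -> : 1 - 2 * p - d * (1 - 2 * d^-1 - s) / 2 = d * (s - w) / 2.
    by rewrite /w; field.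
  by rewrite divr_gt0 ?ltr0n // mulr_gt0 // subr_gt0.
- apply/eqP; rewrite -subr_eq0; apply/eqP.
  have -> : d * (p + d * (1 - 2 * d^-1 - s) / 2) - (1 + d * (1 - 2 * d^-1 - s) / 2) ^+ 2
     = - (d ^+ 2 / 4) * (s ^+ 2 - w) by rewrite /w; field.
  by rewrite s2 subrr mulr0.
Qed.

(* The entries of the Jacobian [jac] as a function of natural-number indices,
   so that the 3x3 formulas above apply to it. *)
Definition jac_entry (C : numClosedFieldType) (beta gamma mu p S0 S1 A : C)
    (i j : nat) : C :=
  match i, j with
  | 0, 0 => - beta * A - mu
  | 0, 1 => 0
  | 0, _ => - beta * S0
  | 1, 0 => (1 - p) * beta * A
  | 1, 1 => - beta * A - mu
  | 1, _ => (1 - p) * beta * S0 - beta * S1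
  | _, 0 => p * beta * A
  | _, 1 => beta * A
  | _, _ => beta * (p * S0 + S1) - gamma - mu
  end.

Lemma jacE (C : numClosedFieldType) (beta gamma mu p S0 S1 A : C) :
  jac beta gamma mu p S0 S1 A =
  \matrix_(i < 3, j < 3) jac_entry beta gamma mu p S0 S1 A i j.
Proof. by []. Qed.

Section Equilibrium.
Variables (C : numClosedFieldType) (beta gamma mu p : C).
Hypotheses (beta_gt0 : 0 < beta) (gamma_gt0 : 0 < gamma) (mu_gt0 : 0 < mu)
  (p_gt0 : 0 < p) (p_lt_half : p < 2^-1)
  (delta_gt : 4 * (1 - p) < delta beta gamma mu)
  (delta_lt : delta beta gamma mu < p^-1).

Let y : C := beta / mu * A2 beta gamma mu p.

Lemma E2_level :
  [/\ 0 < y, 0 < 1 - 2 * p - y & delta beta gamma mu * (p + y) = (1 + y) ^+ 2].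
Proof.
have delta_gt0 : 0 < delta beta gamma mu by rewrite divr_gt0 // addr_gt0.
have -> : y = delta beta gamma mu * (1 - 2 * (delta beta gamma mu)^-1
     - sqrtC (1 - 4 * (1 - p) * (delta beta gamma mu)^-1)) / 2.
  rewrite /y /A2 /delta; field.
  by rewrite !gt_eqF ?addr_gt0.
exact: adopter_level.
Qed.

Lemma E2_coordinates :
  [/\ A2 beta gamma mu p = mu * y / beta,
      S0_2 beta gamma mu p = (1 + y)^-1
    & S1_2 beta gamma mu p = (1 - p) * y / (1 + y) ^+ 2].
Proof.
have scaled_A2 : delta beta gamma mu * (gamma / mu + 1) * A2 beta gamma mu p = y.
  by rewrite /y /delta; field; rewrite !gt_eqF ?addr_gt0.
split.
- by rewrite /y; field; rewrite !gt_eqF.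
- by rewrite /S0_2 scaled_A2 addrC div1r.
- rewrite /S1_2 scaled_A2 [y + 1]addrC; congr (_ / _).
  by rewrite -scaled_A2; ring.
Qed.

(* At E_2 the adopter compartment is at equilibrium: J_33 = 0. *)
Lemma E2_jac33 :
  beta * (p * S0_2 beta gamma mu p + S1_2 beta gamma mu p) - gamma - mu = 0.
Proof.
have [y_gt0 _ level] := E2_level; have [_ -> ->] := E2_coordinates.
have -> : beta * (p * (1 + y)^-1 + (1 - p) * y / (1 + y) ^+ 2) - gamma - mu
    = (gamma + mu) / (1 + y) ^+ 2 * (delta beta gamma mu * (p + y) - (1 + y) ^+ 2).
  by rewrite /delta; field; rewrite !gt_eqF ?addr_gt0.
by rewrite level subrr mulr0.
Qed.

Lemma E2_char_poly : exists2 b : C, b \is Num.real &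
  char_poly (J_E2 beta gamma mu p)
  = cub (2 * mu * (1 + y)) b (- (beta * mu ^+ 2 * y * (1 - 2 * p - y) / (1 + y))).
Proof.
have [y_gt0 _ _] := E2_level; have [A2E S0E S1E] := E2_coordinates.
rewrite /J_E2 jacE char_poly_mx33 det_mx33 /= E2_jac33 A2E S0E S1E.
set b := (X in cub _ X _); exists b.
  have betaR := gtr0_real beta_gt0; have muR := gtr0_real mu_gt0.
  have pR := gtr0_real p_gt0; have yR := gtr0_real y_gt0.
  by rewrite /b !(yR, betaR, muR, pR, rpredD, rpredB, rpredM, rpredN, rpredV,
    rpredX, rpred0, rpred1).
by congr cub; field; rewrite !gt_eqF ?addr_gt0.
Qed.

End Equilibrium.

Theorem mainTheorem7 (C : numClosedFieldType) (beta gamma mu p : C) :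
  beta \is Num.real -> gamma \is Num.real -> mu \is Num.real -> p \is Num.real ->
  0 < beta -> 0 < gamma -> 0 < mu -> 0 < p -> p < 2^-1 ->
  4 * (1 - p) < delta beta gamma mu -> delta beta gamma mu < p^-1 ->
  exists l1 l2 l3 : C,
    char_poly (J_E2 beta gamma mu p)
      = ('X - l1%:P) * ('X - l2%:P) * ('X - l3%:P)
    /\ l1 \is Num.real /\ 0 < l1 /\ 'Re l2 < 0 /\ 'Re l3 < 0.
Proof.
move=> _ _ _ _ beta_gt0 gamma_gt0 mu_gt0 p_gt0 p_lt_half delta_gt delta_lt.
have [y_gt0 y_lt _] := E2_level beta_gt0 gamma_gt0 mu_gt0 p_gt0 p_lt_half delta_gt delta_lt.
have [b bR ->] := E2_char_poly beta_gt0 gamma_gt0 mu_gt0 p_gt0 p_lt_half delta_gt delta_lt.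
set y := beta / mu * A2 beta gamma mu p in y_gt0 y_lt *; clearbody y.
apply: real_cubic_saddle bR _ _.
- by rewrite !mulr_gt0 ?ltr0n // addr_gt0.
- by rewrite oppr_lt0 divr_gt0 ?addr_gt0 // !mulr_gt0 // exprn_gt0.
Qed.
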